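(* Let $(\mathcal{P},\cdot)$ be an admissible Poisson algebra such that the center of the Lie algebra $\mathfrak{g}_{\mathcal{P}}=(\mathcal{P},\{\,,\,\})$ is zero. Then $\mathcal{P}$ has no non-zero idempotent. If moreover $\mathcal{P}$ is finite-dimensional, then $\mathcal{P}$ is a nilalgebra.
   Context: $\mathbb{K}$ is a field of characteristic different from $2$ and $3$. Associator: $A(X,Y,Z)=(X\cdot Y)\cdot Z-X\cdot(Y\cdot Z)$. An admissible Poisson algebra is a $\mathbb{K}$-vector space $\mathcal{P}$ with a bilinear product $\cdot$ satisfying $3A(X,Y,Z)=(X\cdot Z)\cdot Y+(Y\cdot Z)\cdot X-(Y\cdot X)\cdot Z-(Z\cdot X)\cdot Y$ for all $X,Y,Z$. Its bracket is $\{X,Y\}=\frac12(X\cdot Y-Y\cdot X)$ (a Lie bracket), and $\mathfrak{g}_{\mathcal{P}}$ denotes $(\mathcal{P},\{\,,\,\})$. Powers: $X^1=X$, $X^{i+1}=X\cdot X^i$; $\mathcal{P}$ is a nilalgebra if for every $X$ there is $r$ with $X^r=0$. *)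

From mathcomp Require Import all_boot all_order all_algebra.
Set Implicit Arguments. Unset Strict Implicit. Unset Printing Implicit Defensive.
Import GRing.Theory.
Local Open Scope ring_scope.

Section AdmissiblePoisson.
Variables (K : fieldType) (P : lmodType K) (mul : P -> P -> P).

Definition bilinear_prod : Prop :=
  (forall a X Y Z, mul (a *: X + Y) Z = a *: mul X Z + mul Y Z) /\
  (forall a X Y Z, mul X (a *: Y + Z) = a *: mul X Y + mul X Z).

Definition assoc (X Y Z : P) : P := mul (mul X Y) Z - mul X (mul Y Z).

Definition admissible_identity : Prop :=
  forall X Y Z, 3%:R *: assoc X Y Z =
    mul (mul X Z) Y + mul (mul Y Z) X - mul (mul Y X) Z - mul (mul Z X) Y.

Definition admissible_Poisson : Prop := bilinear_prod /\ admissible_identity.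

Definition pbracket (X Y : P) : P := (2%:R)^-1 *: (mul X Y - mul Y X).

Definition lie_center_zero : Prop :=
  forall Z, (forall X, pbracket X Z = 0) -> Z = 0.

(* apow X n = X^(n+1) with X^1 = X, X^(i+1) = X . X^i *)
Fixpoint apow (X : P) (n : nat) : P :=
  match n with 0 => X | n'.+1 => mul X (apow X n') end.

Definition nilalgebra : Prop := forall X, exists n, apow X n = 0.

Definition is_idempotent (e : P) : Prop := mul e e = e.

End AdmissiblePoisson.

Definition finite_dim (K : fieldType) (P : lmodType K) : Prop :=
  exists s : seq P, forall x : P,
    exists c : 'I_(size s) -> K, x = \sum_(i < size s) c i *: s`_i.

From mathcomp Require Import all_boot all_order all_algebra.
From Stdlib Require Import ClassicalEpsilon.
Set Implicit Arguments. Unset Strict Implicit. Unset Printing Implicit Defensive.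
Import GRing.Theory.
Local Open Scope ring_scope.

(* Write x o y = (xy + yx)/2, so that xy = x o y + {x, y}.  The admissible
   identity makes o commutative and associative and every {x, _} a derivation
   of o.  A derivation d of o kills an idempotent e, since d e = 2 e o d e
   forces e o d e = 0; as the idempotents of the product and of o coincide,
   they are central, hence zero.  Moreover {X, X^n} = 0, so the powers of X are
   its o-powers.  In finite dimension they satisfy a linear relation; dividing
   by its lowest coefficient gives X^(m+1) = X^(m+1) o v with v a polynomial
   in X without constant term.  Then v^(m+1) is an idempotent of o, hence 0,
   and X^(m+1) = X^(m+1) o v^(m+1) = 0. *)

(* [zmodule] proves identities between sums, opposites and natural multiples
   of atoms in a zmodType by reifying both sides and comparing the integer
   coefficient of each atom; atoms are identified up to conversion. *)
Inductive zexpr :=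
  | ZAtom of nat | ZAdd of zexpr & zexpr | ZOpp of zexpr | ZZero | ZMuln of zexpr & nat.

Fixpoint zcoef (e : zexpr) (i : nat) : int :=
  match e with
  | ZAtom j => if i == j then 1 else 0
  | ZAdd a b => zcoef a i + zcoef b i
  | ZOpp a => - zcoef a i
  | ZZero => 0
  | ZMuln a k => zcoef a i * k%:Z
  end.

Section ZmodReflection.
Variable V : zmodType.
Implicit Type env : seq V.

Fixpoint zeval env (e : zexpr) : V :=
  match e with
  | ZAtom j => env`_j
  | ZAdd a b => zeval env a + zeval env b
  | ZOpp a => - zeval env a
  | ZZero => 0
  | ZMuln a k => zeval env a *+ k
  end.

Lemma zeval_coef env e :
  zeval env e = \sum_(i < size env) env`_i *~ zcoef e i.
Proof.
elim: e => [j|a IHa b IHb|a IHa||a IHa k] /=.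
- under eq_bigr do rewrite (fun_if (intmul _)) mulr0z.
  rewrite -big_mkcond big_ord1_eq.
  by case: ltnP => // ?; rewrite nth_default.
- by rewrite IHa IHb -big_split; apply: eq_bigr => i _; rewrite mulrzDr.
- by rewrite IHa -sumrN; apply: eq_bigr => i _; rewrite mulrNz.
- by rewrite big1.
- by rewrite IHa -sumrMnl; apply: eq_bigr => i _; rewrite mulrzA.
Qed.

Lemma zeval_eq env e1 e2 :
  all (fun i => zcoef e1 i == zcoef e2 i) (iota 0 (size env)) ->
  zeval env e1 = zeval env e2.
Proof.
move=> /allP same; rewrite !zeval_coef; apply: eq_bigr => i _.
by rewrite (eqP (same i _)) // mem_iota ltn_ord.
Qed.

End ZmodReflection.

Ltac zmod_conv x y := constr:(ltac:(first [unify x y; exact true | exact false]) : bool).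
Ltac zmod_in x l :=
  match l with
  | nil => constr:(false)
  | ?y :: ?t => match zmod_conv x y with true => constr:(true) | false => zmod_in x t end
  end.
Ltac zmod_atoms t env :=
  match t with
  | (?a + ?b)%R => let env' := zmod_atoms a env in zmod_atoms b env'
  | (- ?a)%R => zmod_atoms a env
  | 0%R => env
  | (?a *+ _)%R => zmod_atoms a env
  | _ => match zmod_in t env with true => env | false => constr:(t :: env) end
  end.
Ltac zmod_index x l :=
  match l with
  | ?y :: ?t =>
    match zmod_conv x y with
    | true => constr:(0%N)
    | false => let n := zmod_index x t in constr:(n.+1)
    end
  end.
Ltac zmod_reify t env :=
  match t with
  | (?a + ?b)%R => let ra := zmod_reify a env in let rb := zmod_reify b env in
                   constr:(ZAdd ra rb)
  | (- ?a)%R => let ra := zmod_reify a env in constr:(ZOpp ra)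
  | 0%R => constr:(ZZero)
  | (?a *+ ?k)%R => let ra := zmod_reify a env in constr:(ZMuln ra k)
  | _ => let n := zmod_index t env in constr:(ZAtom n)
  end.
Ltac zmodule :=
  match goal with
  | |- @eq ?V ?l ?r =>
    let env := zmod_atoms r ltac:(zmod_atoms l (@nil V)) in
    let el := zmod_reify l env in
    let er := zmod_reify r env in
    change (zeval env el = zeval env er); apply: zeval_eq; vm_compute; reflexivity
  end.

Section Bilinear.
Variables (K : fieldType) (P : lmodType K) (f : P -> P -> P).
Hypothesis f_bil : bilinear_prod f.

Lemma bilDl x y z : f (x + y) z = f x z + f y z.
Proof. by have := f_bil.1 1 x y z; rewrite !scale1r. Qed.

Lemma bilDr x y z : f x (y + z) = f x y + f x z.
Proof. by have := f_bil.2 1 x y z; rewrite !scale1r. Qed.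

Lemma bil0l z : f 0 z = 0.
Proof. by apply/(addrI (f 0 z)); rewrite -bilDl !addr0. Qed.

Lemma bil0r z : f z 0 = 0.
Proof. by apply/(addrI (f z 0)); rewrite -bilDr !addr0. Qed.

Lemma bilZl a x z : f (a *: x) z = a *: f x z.
Proof. by have := f_bil.1 a x 0 z; rewrite !addr0 bil0l addr0. Qed.

Lemma bilZr a x z : f z (a *: x) = a *: f z x.
Proof. by have := f_bil.2 a z x 0; rewrite !addr0 bil0r addr0. Qed.

Lemma bilNl x z : f (- x) z = - f x z.
Proof. by rewrite -scaleN1r bilZl scaleN1r. Qed.

Lemma bilNr x z : f z (- x) = - f z x.
Proof. by rewrite -scaleN1r bilZr scaleN1r. Qed.

Lemma bil_sumr x I (r : seq I) (Q : pred I) (F : I -> P) :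
  f x (\sum_(i <- r | Q i) F i) = \sum_(i <- r | Q i) f x (F i).
Proof. by apply: (big_morph (f x)) => [y z|]; [exact: bilDr | exact: bil0r]. Qed.

End Bilinear.

Section CommutativeAssociative.
Variables (K : fieldType) (P : lmodType K) (c : P -> P -> P).
Hypotheses (c_bil : bilinear_prod c) (cC : commutative c) (cA : associative c).

Lemma derivation_idempotent_eq0 (d : P -> P) :
  (forall y z, d (c y z) = c (d y) z + c y (d z)) ->
  forall e, c e e = e -> d e = 0.
Proof.
move=> d_leibniz e ee; set u := d e.
have u2 : u = c e u + c e u by rewrite /u -{1}ee d_leibniz cC.
have eu2 : c e u = c e u + c e u by rewrite {1}u2 (bilDr c_bil) !cA ee.
have eu0 : c e u = 0 by apply/(addrI (c e u)); rewrite addr0 -eu2.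
by rewrite u2 eu0 addr0.
Qed.

Fixpoint cpow (X : P) (n : nat) : P := if n is n'.+1 then c X (cpow X n') else X.

Lemma cpowD X i j : c (cpow X i) (cpow X j) = cpow X (i + j).+1.
Proof. by elim: i => [|i IHi] //=; rewrite -cA IHi. Qed.

(* [y] lies in the ideal generated by [a] in the unitization K + P. *)
Definition multiple (a y : P) := exists (b : K) u, y = b *: a + c a u.

Lemma multiple0 a : multiple a 0.
Proof. by exists 0, 0; rewrite scale0r (bil0r c_bil) addr0. Qed.

Lemma multipleZD a k y z :
  multiple a y -> multiple a z -> multiple a (k *: y + z).
Proof.
move=> [b [u ->]] [b' [u' ->]]; exists (k * b + b'), (k *: u + u').
by rewrite (bilDr c_bil) (bilZr c_bil) scalerDl scalerDr -scalerA; zmodule.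
Qed.

Lemma multiple_cpow_self X n : multiple X (cpow X n).
Proof.
case: n => [|n]; first by exists 1, 0; rewrite scale1r (bil0r c_bil) addr0.
by exists 0, (cpow X n); rewrite scale0r add0r.
Qed.

Lemma multiple_sum a I (r : seq I) (Q : pred I) (F : I -> P) :
  (forall i, Q i -> multiple a (F i)) -> multiple a (\sum_(i <- r | Q i) F i).
Proof.
move=> aF; apply: big_ind => //; first exact: multiple0.
by move=> y z ay az; rewrite -[y]scale1r; apply: multipleZD.
Qed.

Lemma multipleM a a' y z :
  multiple a y -> multiple a' z -> multiple (c a a') (c y z).
Proof.
move=> [b [u ->]] [b' [u' ->]]; exists (b * b'), (b *: u' + b' *: u + c u u').
have cCA : left_commutative c by move=> x1 x2 x3; rewrite !cA (cC x1).
rewrite !(bilDl c_bil, bilDr c_bil, bilZl c_bil, bilZr c_bil) scalerA mulrC.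
by rewrite -!cA (cCA u a') (cC u a'); zmodule.
Qed.

Lemma multiple_cpow X v n : multiple X v -> multiple (cpow X n) (cpow v n).
Proof. by move=> Xv; elim: n => [|n IHn] //=; apply: multipleM. Qed.

Lemma multiple_fixed a v y : c a v = a -> multiple a y -> c y v = y.
Proof.
move=> av [b [u ->]].
by rewrite (bilDl c_bil) (bilZl c_bil) av -cA (cC u v) cA av.
Qed.

Lemma fixed_cpow y v n : c y v = y -> c y (cpow v n) = y.
Proof. by move=> yv; elim: n => [|n IHn] //=; rewrite cA yv. Qed.

Lemma fixed_cpow_eq0 X v m :
  (forall e, c e e = e -> e = 0) -> multiple X v ->
  c (cpow X m) v = cpow X m -> cpow X m = 0.
Proof.
move=> idem0 Xv av; set e := cpow v m.
have ee : c e e = e by exact/fixed_cpow/(multiple_fixed av)/multiple_cpow.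
by rewrite -(fixed_cpow m av) -/e (idem0 e ee) (bil0r c_bil).
Qed.

Lemma relation_fixed_cpow X n (w : nat -> K) m :
  (m < n)%N -> w m != 0 -> (forall j, (j < m)%N -> w j = 0) ->
  \sum_(j < n) w j *: cpow X j = 0 ->
  c (cpow X m) (\sum_(j < n | (m < j)%N) (- w j / w m) *: cpow X (j - m.+1))
    = cpow X m.
Proof.
move=> mn wm0 w_lt rel.
have split : \sum_(j < n) w j *: cpow X j =
    \sum_(j < n | (m < j)%N) w j *: cpow X j + w m *: cpow X m.
  rewrite (bigID (fun j : 'I_n => (m < j)%N)) /=; congr (_ + _).
  rewrite (bigD1 (Ordinal mn)) /= ?ltnn // big1 ?addr0 // => j /andP[jm jm'].
  rewrite -val_eqE /= in jm'.
  by rewrite w_lt ?scale0r // ltn_neqAle jm' leqNgt.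
have tail : \sum_(j < n | (m < j)%N) w j *: cpow X j = - (w m *: cpow X m).
  by apply/eqP; rewrite -addr_eq0 -split rel.
rewrite (bil_sumr c_bil).
under eq_bigr => j mj do
  rewrite (bilZr c_bil) cpowD -addSn addnC subnK // mulrC mulrN -mulNr -scalerA.
by rewrite -scaler_sumr tail scaleNr scalerN opprK scalerA mulVf // scale1r.
Qed.

Lemma cpow_eq0_of_relation X n (w : nat -> K) :
  (forall e, c e e = e -> e = 0) ->
  (exists j, (j < n)%N && (w j != 0)) ->
  \sum_(j < n) w j *: cpow X j = 0 -> exists m, cpow X m = 0.
Proof.
move=> idem0 nz rel; case: (ex_minnP nz) => m /andP[mn wm0] m_min.
have w_lt j : (j < m)%N -> w j = 0.
  move=> jm; apply/eqP; apply: contraTT (jm) => wj0.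
  by rewrite -leqNgt m_min // (ltn_trans jm mn) wj0.
exists m; apply: fixed_cpow_eq0 idem0 _ (relation_fixed_cpow mn wm0 w_lt rel).
apply: multiple_sum => j _; rewrite -[_ *: _]addr0.
exact/multipleZD/multiple0/multiple_cpow_self.
Qed.

End CommutativeAssociative.

Section AdmissiblePoissonAlgebra.
Variables (K : fieldType) (P : lmodType K) (mul : P -> P -> P).
Hypotheses (two_neq0 : (2%:R : K) != 0) (three_neq0 : (3%:R : K) != 0).
Hypotheses (mul_bil : bilinear_prod mul) (mul_adm : admissible_identity mul).

Definition anticommutator x y := mul x y + mul y x.
Definition commutator x y := mul x y - mul y x.
Definition jordan x y := (2%:R : K)^-1 *: anticommutator x y.

Definition admissible_defect x y z := 3%:R *: assoc mul x y z -
  (mul (mul x z) y + mul (mul y z) x - mul (mul y x) z - mul (mul z x) y).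

Lemma admissible_defect0 x y z : admissible_defect x y z = 0.
Proof. by rewrite /admissible_defect mul_adm subrr. Qed.

Ltac expand_admissible :=
  rewrite /anticommutator /commutator /admissible_defect /assoc;
  rewrite ?(bilDl mul_bil, bilDr mul_bil, bilNl mul_bil, bilNr mul_bil);
  rewrite ?(scalerDr, scalerBr, scalerN, scaler_nat).

Lemma eq_of_scale3 (u v : P) : 3%:R *: (u - v) = 0 -> u = v.
Proof. by move/eqP; rewrite scaler_eq0 (negPf three_neq0) subr_eq0 => /eqP. Qed.

Lemma anticommutatorA x y z :
  anticommutator (anticommutator x y) z = anticommutator x (anticommutator y z).
Proof.
apply: eq_of_scale3; rewrite (_ : 3%:R *: _ = admissible_defect x y z +
  admissible_defect x z y - admissible_defect z x y - admissible_defect z y x).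
  by rewrite !admissible_defect0 !(addr0, subr0).
by expand_admissible; zmodule.
Qed.

Lemma commutator_leibniz x y z :
  commutator x (anticommutator y z) =
  anticommutator (commutator x y) z + anticommutator y (commutator x z).
Proof.
apply: eq_of_scale3; rewrite (_ : 3%:R *: _ = - admissible_defect x y z
  - admissible_defect x z y + admissible_defect y x z - admissible_defect y z x
  + admissible_defect z x y - admissible_defect z y x).
  by rewrite !admissible_defect0 !(addr0, subr0, oppr0).
by expand_admissible; zmodule.
Qed.

Lemma anticommutator_bil : bilinear_prod anticommutator.
Proof. by split=> a X Y Z; rewrite /anticommutator mul_bil.1 mul_bil.2 scalerDr addrACA. Qed.

Lemma commutator_bil : bilinear_prod commutator.
Proof.
by split=> a X Y Z; rewrite /commutator mul_bil.1 mul_bil.2 scalerBr opprD addrACA.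
Qed.

Lemma jordan_bil : bilinear_prod jordan.
Proof.
have [Dl Dr] := anticommutator_bil.
by split=> a X Y Z; rewrite /jordan ?(Dl, Dr) scalerDr !scalerA mulrC.
Qed.

Lemma jordanC : commutative jordan.
Proof. by move=> x y; rewrite /jordan /anticommutator addrC. Qed.

Lemma jordanA : associative jordan.
Proof.
move=> x y z; rewrite /jordan (bilZl anticommutator_bil) (bilZr anticommutator_bil).
by rewrite anticommutatorA.
Qed.

Lemma pbracket_jordan x y z :
  pbracket mul x (jordan y z) =
  jordan (pbracket mul x y) z + jordan y (pbracket mul x z).
Proof.
rewrite -[pbracket mul]/(fun u v => (2%:R : K)^-1 *: commutator u v) /jordan.
rewrite (bilZr commutator_bil) (bilZl anticommutator_bil).
by rewrite (bilZr anticommutator_bil) commutator_leibniz !scalerA mulrC -scalerDr.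
Qed.

Lemma mul_jordan_pbracket x y : mul x y = jordan x y + pbracket mul x y.
Proof.
rewrite /jordan /pbracket /anticommutator -scalerDr.
have -> : mul x y + mul y x + (mul x y - mul y x) = 2%:R *: mul x y.
  by rewrite scaler_nat; zmodule.
by rewrite scalerK.
Qed.

Lemma pbracketxx x : pbracket mul x x = 0.
Proof. by rewrite /pbracket subrr scaler0. Qed.

Lemma mul_jordan_sq x : mul x x = jordan x x.
Proof. by rewrite mul_jordan_pbracket pbracketxx addr0. Qed.

Lemma apow_jordan X n : apow mul X n = cpow jordan X n.
Proof.
have pbracket_cpow k : pbracket mul X (cpow jordan X k) = 0.
  elim: k => [|k IHk] /=; first exact: pbracketxx.
  by rewrite pbracket_jordan pbracketxx IHk (bil0l jordan_bil) (bil0r jordan_bil) addr0.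
elim: n => [|n IHn] //=.
by rewrite IHn mul_jordan_pbracket pbracket_cpow addr0.
Qed.

Lemma lie_center_zero_idempotent_eq0 :
  lie_center_zero mul -> forall e, is_idempotent mul e -> e = 0.
Proof.
move=> center0 e ee; apply: center0 => x.
apply: (derivation_idempotent_eq0 jordan_bil jordanC jordanA (pbracket_jordan x)).
by rewrite -mul_jordan_sq.
Qed.

End AdmissiblePoissonAlgebra.

Lemma finite_dim_relation (K : fieldType) (P : lmodType K) :
  finite_dim P -> forall f : nat -> P, exists n (w : nat -> K),
    (exists j, (j < n)%N && (w j != 0)) /\ \sum_(j < n) w j *: f j = 0.
Proof.
move=> [s span] f; set d := size s in span.
have [coord coordP] : {coord : P -> 'I_d -> K |
    forall x, x = \sum_(i < d) coord x i *: s`_i}.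
  by exists (fun x => proj1_sig (constructive_indefinite_description _ (span x)))
     => x; case: constructive_indefinite_description.
pose M := \matrix_(j < d.+1, i < d) coord (f j) i.
pose w := nz_row (kermx M).
have wM : w *m M = 0 by apply/sub_kermxP/nz_row_sub.
have /matrix0Pn[i0 [j0 wj0]] : w != 0.
  by rewrite nz_row_eq0 kermx_eq0 /row_free neq_ltn ltnS rank_leq_col.
exists d.+1, (fun j => w 0 (inord j)); split.
  by exists j0; rewrite ltn_ord inord_val -(ord1 i0).
under eq_bigr => j _ do rewrite inord_val [f j]coordP scaler_sumr.
rewrite exchange_big /= big1 // => i _.
transitivity ((w *m M) 0 i *: s`_i); last by rewrite wM mxE scale0r.
by rewrite mxE scaler_suml; apply: eq_bigr => j _; rewrite scalerA mxE.
Qed.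

Theorem mainTheorem5 (K : fieldType) (P : lmodType K) (mul : P -> P -> P) :
  (2%:R : K) != 0 -> (3%:R : K) != 0 ->
  admissible_Poisson mul ->
  lie_center_zero mul ->
  (forall e : P, is_idempotent mul e -> e = 0) /\
  (finite_dim P -> nilalgebra mul).
Proof.
move=> two_neq0 three_neq0 [mul_bil mul_adm] center0.
have idem0 := lie_center_zero_idempotent_eq0 two_neq0 three_neq0 mul_bil mul_adm center0.
split=> // fin X.
have jordan_idem0 e : jordan mul e e = e -> e = 0.
  by rewrite -mul_jordan_sq //; apply: idem0.
have [n [w [nz rel]]] := finite_dim_relation fin (cpow (jordan mul) X).
have [m Xm0] := cpow_eq0_of_relation (jordan_bil mul_bil) (@jordanC K P mul)
  (jordanA three_neq0 mul_bil mul_adm) jordan_idem0 nz rel.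
by exists m; rewrite apow_jordan.
Qed.
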